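(* Let $0<\underline\theta<\overline\theta<\infty$ and let the buyer of type $\theta\in[\underline\theta,\overline\theta]$ have utility $u(t,q;\theta)=\theta q-qt$ on $\mathbb{Z}$. Let $\theta$ have distribution $\Gamma$ with continuous, strictly positive density $\gamma$ on $[\underline\theta,\overline\theta]$, with nondecreasing hazard rate: $\frac{\gamma(\theta')}{1-\Gamma(\theta')}\le\frac{\gamma(\theta'')}{1-\Gamma(\theta'')}$ for $\theta'<\theta''$. Let $\mathcal F$ be the set of mechanisms $F=(t,q):[\underline\theta,\overline\theta]\to[0,\overline\theta]\times[0,1]$ with finite range that are strategy-proof ($u(F(\theta);\theta)\ge u(F(\theta');\theta)$ for all $\theta,\theta'$), individually rational ($u(F(\theta);\theta)\ge0$), and satisfy: $u(F(\theta);\theta)=0$ implies $F(\theta)=(0,0)$. The seller's expected revenue is $E(F)=\int_{\underline\theta}^{\overline\theta}q(\theta)t(\theta)\gamma(\theta)\,d\theta$. Then a revenue-maximizing $F^*\in\mathcal F$ exists and is deterministic: there is $\theta^*\in[\underline\theta,\overline\theta]$ with $F^*(\theta)=(0,0)$ for $\theta\in[\underline\theta,\theta^*]$ and $F^*(\theta)=(\theta^*,1)$ for $\theta\in(\theta^*,\overline\theta]$.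
   Context: $\mathbb{Z}=[0,\infty)\times[0,1]$; $q$ is the probability of winning an indivisible object, $t$ is the payment made upon winning, and $\theta$ is the valuation. *)

From Stdlib Require Import Reals List.
From Coquelicot Require Import Coquelicot.
Open Scope R_scope.

Definition util (t q theta : R) : R := theta * q - q * t.

Definition cont_on (a b : R) (f : R -> R) : Prop :=
  forall x, a <= x <= b -> forall eps, 0 < eps -> exists delta, 0 < delta /\
    forall y, a <= y <= b -> Rabs (y - x) < delta -> Rabs (f y - f x) < eps.

Definition cdf (lo : R) (gamma : R -> R) (theta : R) : R := RInt gamma lo theta.

Definition admissible (lo hi : R) (t q : R -> R) : Prop :=
  (forall th, lo <= th <= hi -> 0 <= t th <= hi /\ 0 <= q th <= 1) /\
  (exists l : list (R * R), forall th, lo <= th <= hi -> In (t th, q th) l) /\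
  (forall th th', lo <= th <= hi -> lo <= th' <= hi ->
     util (t th') (q th') th <= util (t th) (q th) th) /\
  (forall th, lo <= th <= hi -> 0 <= util (t th) (q th) th) /\
  (forall th, lo <= th <= hi -> util (t th) (q th) th = 0 -> t th = 0 /\ q th = 0).

Definition revenue (lo hi : R) (gamma t q : R -> R) : R :=
  RInt (fun th => q th * t th * gamma th) lo hi.

From Stdlib Require Import Reals List Lra Lia Classical.
From Coquelicot Require Import Coquelicot.
Open Scope R_scope.

(* Write p = q t for the payment.  Strategy-proofness gives, for th <= th',
   th (q th' - q th) <= p th' - p th <= th' (q th' - q th); in particular q is
   nondecreasing and p is constant on each level set of q.  Since q has finitely many
   values, peel off the top one: if s lies on the second-highest level, the mechanism
   in which every type above s reports s is again strategy-proof, and p exceeds its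
   payment by c (q hi - q s) above a threshold c and by 0 below.  So the top layer is a
   posted price c sold in quantity q hi - q s, earning at most (q hi - q s) R* with
   R* = max_c c (1 - Gamma c).  By induction on the number of values the revenue is at
   most q hi R* <= R*, which the posted price at the maximiser attains. *)

(* The density is continuous only on [lo, hi]; composing with [clamp] extends it to a
   function continuous on all of R, as the derivative of the tail integral requires. *)
Definition clamp (lo hi x : R) : R := Rmax lo (Rmin hi x).

Lemma clamp_in lo hi x : lo <= hi -> lo <= clamp lo hi x <= hi.
Proof. intros; unfold clamp, Rmax, Rmin; repeat destruct Rle_dec; lra. Qed.

Lemma clamp_id lo hi x : lo <= x <= hi -> clamp lo hi x = x.
Proof. intros; unfold clamp, Rmax, Rmin; repeat destruct Rle_dec; lra. Qed.

Lemma clamp_dist lo hi x y : lo <= hi ->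
  Rabs (clamp lo hi y - clamp lo hi x) <= Rabs (y - x).
Proof.
  intros; unfold clamp, Rmax, Rmin; repeat destruct Rle_dec;
  unfold Rabs; repeat destruct Rcase_abs; lra.
Qed.

Lemma continuous_clamp_ext lo hi f : lo <= hi -> cont_on lo hi f ->
  forall x, continuous (fun y => f (clamp lo hi y)) x.
Proof.
  intros Hlohi Hf x. apply filterlim_locally. intros eps.
  destruct (Hf (clamp lo hi x) (clamp_in lo hi x Hlohi) eps (cond_pos eps))
    as (delta & Hdelta & Hclose).
  exists (mkposreal delta Hdelta). intros y Hy.
  change (Rabs (y - x) < delta) in Hy.
  apply Hclose; [apply clamp_in; exact Hlohi|].
  pose proof (clamp_dist lo hi x y Hlohi). lra.
Qed.

Lemma continuity_pt_tail_integral (g : R -> R) hi :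
  (forall x, continuous g x) -> forall c, continuity_pt (fun a => a * RInt g a hi) c.
Proof.
  intros Hg c. apply continuity_pt_filterlim.
  assert (Htail : continuous (fun a => RInt g a hi) c).
  { apply (@ex_derive_continuous R_AbsRing R_NormedModule).
    exists (opp (g c)). apply (is_derive_RInt' g (fun a => RInt g a hi) c hi); [|apply Hg].
    apply filter_forall. intros a. apply (@RInt_correct R_CompleteNormedModule).
    apply (@ex_RInt_continuous R_CompleteNormedModule). intros; apply Hg. }
  exact (continuous_mult (fun a => a) _ c (continuous_id c) Htail).
Qed.

Lemma is_RInt_ext_ord (f h : R -> R) a b l : a <= b ->
  (forall x, a < x < b -> f x = h x) -> is_RInt f a b l -> is_RInt h a b l.
Proof.
  intros Hab Heq. apply is_RInt_ext. intros x.
  rewrite Rmin_left, Rmax_right by exact Hab. apply Heq.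
Qed.

Lemma is_RInt_threshold (f g : R -> R) lo c hi K : lo <= c <= hi -> ex_RInt g c hi ->
  (forall x, lo < x < c -> f x = 0) -> (forall x, c < x < hi -> f x = K * g x) ->
  is_RInt f lo hi (K * RInt g c hi).
Proof.
  intros Hc Hg Hbelow Habove.
  replace (K * RInt g c hi) with (plus (scal (c - lo) 0) (scal K (RInt g c hi)))
    by (unfold plus, scal; simpl; unfold mult; simpl; ring).
  apply (@is_RInt_Chasles R_NormedModule f lo c hi).
  - apply (is_RInt_ext_ord (fun _ => 0)); [lra| |apply (@is_RInt_const R_NormedModule)].
    intros x Hx. symmetry. apply Hbelow. exact Hx.
  - apply (is_RInt_ext_ord (fun x => scal K (g x))); [lra| |].
    + intros x Hx. symmetry. apply Habove. exact Hx.
    + apply (@is_RInt_scal R_NormedModule). apply (@RInt_correct R_CompleteNormedModule). exact Hg.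
Qed.

Definition ic_payment_bounds (lo hi : R) (q p : R -> R) : Prop :=
  forall th th', lo <= th -> th <= th' -> th' <= hi ->
    th * (q th' - q th) <= p th' - p th <= th' * (q th' - q th).

Lemma admissible_ic_payment_bounds lo hi t q :
  admissible lo hi t q -> ic_payment_bounds lo hi q (fun th => q th * t th).
Proof.
  intros (_ & _ & Hsp & _) th th' Hlo Hle Hhi.
  pose proof (Hsp th th' ltac:(lra) ltac:(lra)) as Hstay.
  pose proof (Hsp th' th ltac:(lra) ltac:(lra)) as Hstay'.
  unfold util in *. lra.
Qed.

Section IncentiveCompatibility.

Variables (lo hi : R) (q p : R -> R).
Hypothesis Hic : ic_payment_bounds lo hi q p.

Lemma ic_allocation_monotone th th' : lo <= th -> th <= th' -> th' <= hi -> q th <= q th'.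
Proof.
  intros Hlo Hle Hhi. destruct (Req_dec th th') as [<-|Hne]; [lra|].
  pose proof (Hic th th' Hlo Hle Hhi). nra.
Qed.

Lemma ic_payment_level th th' : lo <= th -> th <= th' -> th' <= hi ->
  q th = q th' -> p th = p th'.
Proof.
  intros Hlo Hle Hhi Hq. pose proof (Hic th th' Hlo Hle Hhi) as Hb.
  rewrite Hq, Rminus_diag, Rmult_0_r in Hb. lra.
Qed.

Lemma ic_payment_bounds_truncate s : lo <= s <= hi ->
  ic_payment_bounds lo hi (fun th => q (Rmin th s)) (fun th => p (Rmin th s)).
Proof.
  intros Hs th th' Hlo Hle Hhi. unfold Rmin.
  destruct (Rle_dec th s), (Rle_dec th' s); try lra.
  - apply Hic; lra.
  - pose proof (Hic th s Hlo r ltac:(lra)).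
    pose proof (ic_allocation_monotone th s Hlo r ltac:(lra)). nra.
Qed.

End IncentiveCompatibility.

Lemma list_max_satisfying (l : list R) (P : R -> Prop) :
  (exists x, In x l /\ P x) ->
  exists m, In m l /\ P m /\ forall y, In y l -> P y -> y <= m.
Proof.
  induction l as [|a l IH]; intros (x & Hx & Px); [destruct Hx|].
  destruct (classic (exists y, In y l /\ P y)) as [Htail|Htail].
  - destruct (IH Htail) as (m & Hm & Pm & Hmax).
    destruct (classic (P a /\ m < a)) as [[Pa Ham]|Hnot].
    + exists a. split; [left; reflexivity|split; [exact Pa|]].
      intros y [<-|Hy] Py; [lra|]. specialize (Hmax y Hy Py). lra.
    + exists m. split; [right; exact Hm|split; [exact Pm|]].
      intros y [<-|Hy] Py; [|auto]. apply Rnot_lt_le. intros Hlt. auto.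
  - exists a. destruct Hx as [<-|Hx]; [|exfalso; eauto].
    split; [left; reflexivity|split; [exact Px|]].
    intros y [<-|Hy] Py; [lra|exfalso; eauto].
Qed.

Definition top_layer_price (hi s : R) (q p : R -> R) : R := (p hi - p s) / (q hi - q s).

Section TopLayer.

Variables (lo hi s : R) (q p : R -> R).
Hypothesis Hic : ic_payment_bounds lo hi q p.
Hypothesis Hs : lo <= s <= hi.
Hypothesis Hs_below_top : q s < q hi.
Hypothesis Hs_second : forall th, lo <= th <= hi -> q th < q hi -> q th <= q s.

Lemma top_layer_price_le th : lo <= th <= hi -> q th = q hi -> top_layer_price hi s q p <= th.
Proof.
  intros Hth Htop. unfold top_layer_price. apply Rle_div_l; [lra|].
  assert (Hst : s <= th).
  { apply Rnot_lt_le. intros Hts.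
    pose proof (ic_allocation_monotone lo hi q p Hic th s ltac:(lra) ltac:(lra) ltac:(lra)).
    lra. }
  pose proof (Hic s th ltac:(lra) Hst ltac:(lra)) as Hb.
  rewrite (ic_payment_level lo hi q p Hic th hi) in Hb by lra.
  rewrite Htop in Hb. lra.
Qed.

Lemma second_level_le_top_layer_price th : lo <= th <= hi -> q th = q s ->
  th <= top_layer_price hi s q p.
Proof.
  intros Hth Hlevel. unfold top_layer_price. apply Rle_div_r; [lra|].
  pose proof (Hic th hi ltac:(lra) ltac:(lra) ltac:(lra)) as Hb.
  assert (Hps : p th = p s).
  { destruct (Rle_dec th s).
    - apply (ic_payment_level lo hi q p Hic); lra.
    - symmetry. apply (ic_payment_level lo hi q p Hic); lra. }
  rewrite Hlevel, Hps in Hb. lra.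
Qed.

Lemma le_top_layer_price th : lo <= th <= hi -> q th < q hi ->
  th <= top_layer_price hi s q p.
Proof.
  intros Hth Hbelow. destruct (Rle_dec th s) as [Hts|Hst].
  - pose proof (second_level_le_top_layer_price s Hs eq_refl). lra.
  - apply second_level_le_top_layer_price; [exact Hth|].
    pose proof (Hs_second th Hth Hbelow).
    pose proof (ic_allocation_monotone lo hi q p Hic s th ltac:(lra) ltac:(lra) ltac:(lra)).
    lra.
Qed.

Lemma top_layer_price_between : q lo < q hi -> lo <= top_layer_price hi s q p <= hi.
Proof.
  intros Hlo. split.
  - apply le_top_layer_price; lra.
  - apply top_layer_price_le; lra.
Qed.

Lemma payment_truncation_gap th : lo <= th <= hi ->
  (th < top_layer_price hi s q p -> p th - p (Rmin th s) = 0) /\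
  (top_layer_price hi s q p < th ->
     p th - p (Rmin th s) = top_layer_price hi s q p * (q hi - q s)).
Proof.
  intros Hth.
  pose proof (ic_allocation_monotone lo hi q p Hic th hi ltac:(lra) ltac:(lra) ltac:(lra)).
  split; intros Hprice.
  - assert (Hbelow : q th < q hi).
    { destruct (Req_dec (q th) (q hi)) as [Htop|]; [|lra].
      pose proof (top_layer_price_le th Hth Htop). lra. }
    unfold Rmin. destruct (Rle_dec th s); [lra|].
    pose proof (Hs_second th Hth Hbelow).
    pose proof (ic_allocation_monotone lo hi q p Hic s th ltac:(lra) ltac:(lra) ltac:(lra)).
    rewrite (ic_payment_level lo hi q p Hic s th) by lra. lra.
  - assert (Htop : q th = q hi).
    { destruct (Req_dec (q th) (q hi)) as [|Hne]; [assumption|].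
      pose proof (le_top_layer_price th Hth ltac:(lra)). lra. }
    assert (Hst : s < th) by (pose proof (le_top_layer_price s Hs Hs_below_top); lra).
    rewrite Rmin_right by lra.
    rewrite (ic_payment_level lo hi q p Hic th hi) by lra.
    unfold top_layer_price. field. lra.
Qed.

End TopLayer.

Section RevenueBound.

Variables (lo hi Rstar : R) (g : R -> R).
Hypothesis Hlohi : lo < hi.
Hypothesis Hg : ex_RInt g lo hi.
Hypothesis Hg1 : RInt g lo hi = 1.
Hypothesis HRstar : forall c, lo <= c <= hi -> c * RInt g c hi <= Rstar.

Lemma revenue_bound_flat (q p : R -> R) :
  ic_payment_bounds lo hi q p -> (forall th, lo <= th <= hi -> q th = q hi) ->
  0 <= q lo -> p lo <= lo * q lo ->
  exists r, is_RInt (fun th => p th * g th) lo hi r /\ r <= q hi * Rstar.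
Proof.
  intros Hic Hflat Hq0 Hp0. exists (p lo * RInt g lo hi). split.
  - apply is_RInt_threshold; [lra|exact Hg|intros; lra|].
    intros x Hx. f_equal. symmetry.
    apply (ic_payment_level lo hi q p Hic); [lra|lra|lra|].
    rewrite (Hflat lo), (Hflat x) by lra. reflexivity.
  - pose proof (HRstar lo ltac:(lra)) as Hlo. rewrite Hg1 in *.
    rewrite <- (Hflat lo) by lra. nra.
Qed.

Lemma second_level_exists (q : R -> R) (l : list R) :
  (forall th, lo <= th <= hi -> In (q th) l) ->
  (exists th, lo <= th <= hi /\ q th < q hi) ->
  exists s, lo <= s <= hi /\ q s < q hi /\
    forall th, lo <= th <= hi -> q th < q hi -> q th <= q s.
Proof.
  intros Hrange (th & Hth & Hbelow).
  destruct (list_max_satisfying l (fun v => exists th, lo <= th <= hi /\ q th = v /\ v < q hi))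
    as (m & _ & (s & Hs & <- & Hsbelow) & Hmax).
  { exists (q th). split; [apply Hrange; exact Hth|exists th; auto]. }
  exists s. repeat split; try lra.
  intros th' Hth' Hbelow'. apply Hmax; [apply Hrange; exact Hth'|exists th'; auto].
Qed.

Lemma is_RInt_top_layer (q p : R -> R) (s : R) :
  ic_payment_bounds lo hi q p -> lo <= s <= hi -> q s < q hi ->
  (forall th, lo <= th <= hi -> q th < q hi -> q th <= q s) ->
  lo <= top_layer_price hi s q p <= hi ->
  is_RInt (fun th => p th * g th - p (Rmin th s) * g th) lo hi
    (top_layer_price hi s q p * (q hi - q s) * RInt g (top_layer_price hi s q p) hi).
Proof.
  intros Hic Hs Hs_below Hs_second Hc.
  apply is_RInt_threshold; [exact Hc| | |].
  - apply (@ex_RInt_Chasles_2 R_CompleteNormedModule g lo); assumption.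
  - intros x Hx. destruct (payment_truncation_gap lo hi s q p Hic Hs Hs_below Hs_second x)
      as [Hgap _]; [lra|]. rewrite <- Rmult_minus_distr_r, Hgap by lra. ring.
  - intros x Hx. destruct (payment_truncation_gap lo hi s q p Hic Hs Hs_below Hs_second x)
      as [_ Hgap]; [lra|]. rewrite <- Rmult_minus_distr_r, Hgap by lra. reflexivity.
Qed.

Lemma revenue_bound_finite_range (n : nat) : forall (l : list R) (q p : R -> R),
  (length l <= n)%nat -> (forall th, lo <= th <= hi -> In (q th) l) ->
  ic_payment_bounds lo hi q p -> 0 <= q lo -> p lo <= lo * q lo ->
  exists r, is_RInt (fun th => p th * g th) lo hi r /\ r <= q hi * Rstar.
Proof.
  induction n as [|n IH]; intros l q p Hlen Hrange Hic Hq0 Hp0.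
  { destruct l; [destruct (Hrange lo ltac:(lra))|simpl in Hlen; lia]. }
  destruct (classic (exists th, lo <= th <= hi /\ q th < q hi)) as [Hlow|Hflat].
  2:{ apply revenue_bound_flat; auto. intros th Hth.
      pose proof (ic_allocation_monotone lo hi q p Hic th hi ltac:(lra) ltac:(lra) ltac:(lra)).
      destruct (Req_dec (q th) (q hi)); [assumption|exfalso; apply Hflat; exists th; split; lra]. }
  destruct (second_level_exists q l Hrange Hlow) as (s & Hs & Hs_below & Hs_second).
  set (c := top_layer_price hi s q p).
  assert (Hqlo : q lo < q hi).
  { destruct Hlow as (th & Hth & Hbelow).
    pose proof (ic_allocation_monotone lo hi q p Hic lo th ltac:(lra) ltac:(lra) ltac:(lra)). lra. }
  assert (Hc : lo <= c <= hi) by (apply (top_layer_price_between lo); auto).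
  destruct (IH (remove Req_EM_T (q hi) l) (fun th => q (Rmin th s)) (fun th => p (Rmin th s)))
    as (r & Hr & Hrle).
  - pose proof (remove_length_lt Req_EM_T l (q hi) (Hrange hi ltac:(lra))). lia.
  - intros th Hth. apply in_in_remove; [|apply Hrange; unfold Rmin; destruct Rle_dec; lra].
    pose proof (ic_allocation_monotone lo hi q p Hic (Rmin th s) s).
    unfold Rmin in *. destruct Rle_dec; lra.
  - apply ic_payment_bounds_truncate; assumption.
  - rewrite Rmin_left by lra. exact Hq0.
  - rewrite !Rmin_left by lra. exact Hp0.
  - pose proof (is_RInt_top_layer q p s Hic Hs Hs_below Hs_second Hc) as Hlayer.
    exists (r + c * (q hi - q s) * RInt g c hi). split.
    + apply (is_RInt_ext_ord (fun th => plus (p (Rmin th s) * g th)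
                                             (p th * g th - p (Rmin th s) * g th))).
      * lra.
      * intros x _. unfold plus; simpl. ring.
      * apply (@is_RInt_plus R_NormedModule); assumption.
    + rewrite Rmin_right in Hrle by lra.
      pose proof (HRstar c Hc). nra.
Qed.

End RevenueBound.

Lemma admissible_revenue_le lo hi Rstar g t q : lo < hi -> ex_RInt g lo hi ->
  RInt g lo hi = 1 -> (forall c, lo <= c <= hi -> c * RInt g c hi <= Rstar) ->
  admissible lo hi t q -> revenue lo hi g t q <= Rstar.
Proof.
  intros Hlohi Hg Hg1 HRstar Hadm.
  pose proof Hadm as (Hbounds & (L & HL) & _ & Hir & _).
  destruct (revenue_bound_finite_range lo hi Rstar g Hlohi Hg Hg1 HRstar (length (map snd L))
              (map snd L) q (fun th => q th * t th)) as (r & Hr & Hrle).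
  - lia.
  - intros th Hth. exact (in_map snd L _ (HL th Hth)).
  - apply admissible_ic_payment_bounds; exact Hadm.
  - apply Hbounds; lra.
  - pose proof (Hir lo ltac:(lra)). unfold util in *. lra.
  - unfold revenue. rewrite (is_RInt_unique _ _ _ r Hr).
    assert (HR0 : 0 <= Rstar).
    { pose proof (HRstar hi ltac:(lra)) as Hhi. rewrite RInt_point in Hhi.
      change (hi * 0 <= Rstar) in Hhi. lra. }
    assert (q hi <= 1) by (apply Hbounds; lra). nra.
Qed.

Definition posted_price_payment (c th : R) : R := if Rlt_dec c th then c else 0.
Definition posted_price_allocation (c th : R) : R := if Rlt_dec c th then 1 else 0.

Lemma admissible_posted_price lo hi c : 0 <= c <= hi ->
  admissible lo hi (posted_price_payment c) (posted_price_allocation c).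
Proof.
  intros Hc. unfold admissible, util, posted_price_payment, posted_price_allocation.
  repeat split; intros; repeat destruct Rlt_dec; try lra.
  exists ((c, 1) :: (0, 0) :: nil). intros th _. destruct Rlt_dec; simpl; auto.
Qed.

Lemma revenue_posted_price lo hi g c : lo <= c <= hi -> ex_RInt g lo hi ->
  revenue lo hi g (posted_price_payment c) (posted_price_allocation c) = c * RInt g c hi.
Proof.
  intros Hc Hg. unfold revenue. apply is_RInt_unique, is_RInt_threshold; [exact Hc| | |].
  - apply (@ex_RInt_Chasles_2 R_CompleteNormedModule g lo); assumption.
  - intros x Hx. unfold posted_price_payment, posted_price_allocation.
    destruct Rlt_dec; [lra|ring].
  - intros x Hx. unfold posted_price_payment, posted_price_allocation.
    destruct Rlt_dec; [ring|lra].
Qed.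

Lemma revenue_ext lo hi g h t q : lo <= hi -> (forall x, lo <= x <= hi -> g x = h x) ->
  revenue lo hi g t q = revenue lo hi h t q.
Proof.
  intros Hlohi Heq. unfold revenue. apply RInt_ext. intros x Hx.
  rewrite Rmin_left, Rmax_right in Hx by exact Hlohi. rewrite Heq by lra. reflexivity.
Qed.

Theorem mainTheorem19 (lo hi : R) (gamma : R -> R)
  (Hlo : 0 < lo) (Hlohi : lo < hi)
  (Hcont : cont_on lo hi gamma)
  (Hpos : forall th, lo <= th <= hi -> 0 < gamma th)
  (Hdens : RInt gamma lo hi = 1)
  (Hhazard : forall th1 th2, lo <= th1 -> th1 < th2 -> th2 < hi ->
     gamma th1 / (1 - cdf lo gamma th1) <= gamma th2 / (1 - cdf lo gamma th2)) :
  exists (ts qs : R -> R),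
    admissible lo hi ts qs /\
    (forall t q, admissible lo hi t q -> revenue lo hi gamma t q <= revenue lo hi gamma ts qs) /\
    exists thstar, lo <= thstar <= hi /\
      (forall th, lo <= th <= thstar -> ts th = 0 /\ qs th = 0) /\
      (forall th, thstar < th <= hi -> ts th = thstar /\ qs th = 1).
Proof.
  set (g := fun x => gamma (clamp lo hi x)).
  assert (Hg_cont : forall x, continuous g x)
    by (apply continuous_clamp_ext; [lra|exact Hcont]).
  assert (Hg_eq : forall x, lo <= x <= hi -> gamma x = g x)
    by (intros x Hx; unfold g; rewrite clamp_id by exact Hx; reflexivity).
  assert (Hg : ex_RInt g lo hi)
    by (apply (@ex_RInt_continuous R_CompleteNormedModule); intros; apply Hg_cont).
  assert (Hg1 : RInt g lo hi = 1).
  { rewrite <- Hdens. apply RInt_ext. intros x Hx.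
    rewrite Rmin_left, Rmax_right in Hx by lra. symmetry. apply Hg_eq. lra. }
  destruct (continuity_ab_maj (fun c => c * RInt g c hi) lo hi ltac:(lra)
              (fun c _ => continuity_pt_tail_integral g hi Hg_cont c)) as (c & Hmax & Hc).
  exists (posted_price_payment c), (posted_price_allocation c). split; [|split].
  - apply admissible_posted_price. lra.
  - intros t q Hadm.
    rewrite !(revenue_ext lo hi gamma g) by (lra || exact Hg_eq).
    rewrite revenue_posted_price by assumption.
    exact (admissible_revenue_le lo hi _ g t q Hlohi Hg Hg1 Hmax Hadm).
  - exists c. unfold posted_price_payment, posted_price_allocation.
    split; [exact Hc|split]; intros th Hth; destruct Rlt_dec; split; lra.
Qed.
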